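(* Let $S,T$ be totally ordered sets and $M\colon S\times T\to\mathbf{Vec}$ pointwise finite-dimensional, middle exact and indecomposable. If there exist $x\le x'$ in $S$ and $y\le y'$ in $T$ such that, with $b=(x,y')$, $c=(x',y)$, $d=(x',y')$, the map $M_b\oplus M_c\xrightarrow{M(b\le d)-M(c\le d)}M_d$ is not surjective, then $M\cong k_B$ for a block $B$ of type bb.
   Context: $S\times T$ has the product order; modules are functors to $k$-vector spaces with structure maps $M(p\le q)$. Middle exact: for all $x\le x'$, $y\le y'$ with $a=(x,y),b=(x,y'),c=(x',y),d=(x',y')$, the sequence $M_a\to M_b\oplus M_c\to M_d$ with maps $(M(a\le b),M(a\le c))$ and $M(b\le d)-M(c\le d)$ is exact at the middle. A block of type bb is a set $J_S\times J_T$ where $J_S\subseteq S$ and $J_T\subseteq T$ are non-empty upward-closed subsets. $k_B$ is $k$ on $B$, $0$ elsewhere, with identity maps within $B$ and zero otherwise. *)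

From HB Require Import structures.
From mathcomp Require Import all_boot all_order all_algebra.
Set Implicit Arguments. Unset Strict Implicit. Unset Printing Implicit Defensive.
Import Order.TTheory GRing.Theory.
Local Open Scope ring_scope.

(* M_p is represented as k^(pdim p)
   (row vectors); the structure map M(p<=q) is the matrix pmap p q, acting on
   the right: v |-> v *m pmap p q.  pmap p q is only meaningful for p <= q. *)

Section PFD.
Variables (k : fieldType) (dS dT : Order.disp_t)
          (S : orderType dS) (T : orderType dT).

Definition ple (p q : S * T) : bool := ((p.1 <= q.1)%O && (p.2 <= q.2)%O).

Record pfdMod := PfdMod {
  pdim : S * T -> nat;
  pmap : forall p q : S * T, 'M[k]_(pdim p, pdim q);
  pmap_id : forall p, pmap p p = 1%:M;
  pmap_comp : forall p q r, ple p q -> ple q r ->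
                (pmap p q *m pmap q r = pmap p r)%R
}.

Definition mod_iso (M N : pfdMod) : Prop :=
  exists (f : forall p, 'M[k]_(pdim M p, pdim N p))
         (g : forall p, 'M[k]_(pdim N p, pdim M p)),
    (forall p, (f p *m g p = 1%:M)%R /\ (g p *m f p = 1%:M)%R) /\
    (forall p q, ple p q -> (pmap M p q *m f q = f p *m pmap N p q)%R).

Definition dsum_map (M N : pfdMod) p q :
  'M[k]_(pdim M p + pdim N p, pdim M q + pdim N q) :=
  block_mx (pmap M p q) 0%R 0%R (pmap N p q).

Lemma dsum_id (M N : pfdMod) p : dsum_map M N p p = 1%:M.
Proof. by rewrite /dsum_map !pmap_id -scalar_mx_block. Qed.

Lemma dsum_comp (M N : pfdMod) p q r : ple p q -> ple q r ->
  (dsum_map M N p q *m dsum_map M N q r = dsum_map M N p r)%R.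
Proof.
move=> hpq hqr; rewrite /dsum_map mulmx_block !mulmx0 !mul0mx !addr0 !add0r.
by rewrite !pmap_comp.
Qed.

Definition dsum (M N : pfdMod) : pfdMod :=
  PfdMod (@dsum_id M N) (@dsum_comp M N).

Definition zero_mod (M : pfdMod) : Prop := forall p, pdim M p = 0%N.

Definition indecomposable (M : pfdMod) : Prop :=
  ~ zero_mod M /\
  forall N1 N2 : pfdMod, mod_iso M (dsum N1 N2) -> zero_mod N1 \/ zero_mod N2.

Definition sq_diff (M : pfdMod) (b c d : S * T)
  (v : 'rV[k]_(pdim M b)) (w : 'rV[k]_(pdim M c)) : 'rV[k]_(pdim M d) :=
  (v *m pmap M b d - w *m pmap M c d)%R.

Definition middle_exact (M : pfdMod) : Prop :=
  forall (x x' : S) (y y' : T), (x <= x')%O -> (y <= y')%O ->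
    let a := (x, y) in let b := (x, y') in
    let c := (x', y) in let d := (x', y') in
    forall (v : 'rV[k]_(pdim M b)) (w : 'rV[k]_(pdim M c)),
      sq_diff d v w = 0%R <->
      exists u : 'rV[k]_(pdim M a),
        v = (u *m pmap M a b)%R /\ w = (u *m pmap M a c)%R.

Definition up_closed {d} {X : porderType d} (J : pred X) : Prop :=
  forall s s', s \in J -> (s <= s')%O -> s' \in J.
Definition nonempty {X : Type} (J : pred X) : Prop := exists s, s \in J.


Definition inB (JS : pred S) (JT : pred T) (p : S * T) : bool :=
  (p.1 \in JS) && (p.2 \in JT).

Definition kB_map (JS : pred S) (JT : pred T) p q :
  'M[k]_(nat_of_bool (inB JS JT p), nat_of_bool (inB JS JT q)) :=
  \matrix_(i, j) (if inB JS JT p && inB JS JT q then 1%R else 0%R).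

Lemma kB_id JS JT p : kB_map JS JT p p = 1%:M.
Proof.
rewrite /kB_map; case: (inB JS JT p); apply/matrixP => i j; rewrite !mxE //=.
  by rewrite !ord1.
by case: i.
Qed.

Lemma inB_up JS JT (hS : up_closed JS) (hT : up_closed JT) p q :
  ple p q -> inB JS JT p ==> inB JS JT q.
Proof.
case/andP=> h1 h2; apply/implyP; case/andP=> a b; apply/andP; split.
  exact: hS a h1.
exact: hT b h2.
Qed.

Lemma kB_comp JS JT (hS : up_closed JS) (hT : up_closed JT) p q r :
  ple p q -> ple q r ->
  (kB_map JS JT p q *m kB_map JS JT q r = kB_map JS JT p r)%R.
Proof.
move=> /(inB_up hS hT) Hpq /(inB_up hS hT) Hqr; rewrite /kB_map.
move: Hpq Hqr; case: (inB JS JT p); case: (inB JS JT q); case: (inB JS JT r)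
  => //= _ _; apply/matrixP => i j; rewrite !mxE /=;
  rewrite ?big_ord1 ?big_ord0 ?mxE ?mulr1 ?mul0r //; by case: i.
Qed.

Definition kB (JS : pred S) (JT : pred T)
  (hS : up_closed JS) (hT : up_closed JT) : pfdMod :=
  PfdMod (@kB_id JS JT) (kB_comp hS hT).

End PFD.

(* Let U be the (proper) image of M_b (+) M_c in M_d.  We choose
   - JS = {s | s > x' or the image of M_(s,y') in M_d is not inside U}, and
     s1 in JS below x' whose image V1 is least;
   - JT = {t | t > y' or V1 /\ Im M_(x',t) is not inside U}, t1 in JT below
     y' for which V2 = V1 /\ Im M_(x',t1) is least, and t0 outside JT whose
     image is greatest;
   - v2 in V2 and a functional phi on M_d with phi v2 = 1 that kills
     W = U + Im M_(x',t0)  (V2 is not inside W, by the modular law).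
   Middle exactness shows that v2 lifts to every point of B below d, and
   that phi extends to every r >= d by functionals killing the images of the
   points outside B.  Inverse limits of nonempty affine subsets of
   finite-dimensional spaces (via Zorn's lemma) glue these into natural maps
   k_B -> M and M -> k_B composing to the identity of k_B; as M is
   indecomposable, this retraction is an isomorphism. *)

From Pilot Require Import Defs.
From mathcomp Require Import all_boot all_order all_algebra.
From mathcomp Require Import boolp classical_sets.
From mathcomp Require Import zify.
Set Implicit Arguments. Unset Strict Implicit. Unset Printing Implicit Defensive.
Import Order.TTheory GRing.Theory.
Local Open Scope ring_scope.
(* [seq] also defines a [pmap]; we mean the structure maps of a module. *)
Local Notation pmap := Defs.pmap.

Lemma exists_min_measure (X : Type) (P : X -> Prop) (f : X -> nat) :
  (exists x, P x) -> exists x, P x /\ forall y, P y -> (f x <= f y)%N.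
Proof.
case=> x0 Px0.
have hex : exists n, `[< exists x, P x /\ f x = n >].
  by exists (f x0); apply/asboolP; exists x0.
case: (ex_minnP hex) => n /asboolP [x [Px fx]] hmin.
exists x; split => // y Py; rewrite fx; apply: hmin; apply/asboolP; by exists y.
Qed.

Lemma exists_max_measure (X : Type) (P : X -> Prop) (f : X -> nat) (N : nat) :
  (exists x, P x) -> (forall x, P x -> (f x <= N)%N) ->
  exists x, P x /\ forall y, P y -> (f y <= f x)%N.
Proof.
move=> hex hN; have [x [Px hx]] := exists_min_measure (fun x => N - f x)%N hex.
exists x; split => // y Py; have := hx y Py; have := hN x Px; have := hN y Py.
lia.
Qed.

Section LinearAlgebra.
Variable K : fieldType.

(* A set of row vectors closed under the vector space operations is the row
   space of a matrix: take a family in the set of maximal rank. *)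
Lemma subspace_rowspace n (P : 'rV[K]_n -> Prop) :
  P 0 -> (forall a b, P a -> P b -> P (a + b)) ->
  (forall (c : K) a, P a -> P (c *: a)) ->
  exists m (W : 'M[K]_(m, n)), forall v, P v <-> (v <= W)%MS.
Proof.
move=> P0 PD PZ.
have Pcomb m (W : 'M[K]_(m, n)) :
    (forall i, P (row i W)) -> forall u : 'rV_m, P (u *m W).
  move=> hW u; rewrite mulmx_sum_row; apply: (big_ind P) => // i _; exact: PZ.
pose Q (s : {m & 'M[K]_(m, n)}) := forall i, P (row i (projT2 s)).
have [[m W] [/= QW Wmax]] : exists s, Q s /\
    forall s', Q s' -> (\rank (projT2 s') <= \rank (projT2 s))%N.
  apply: (@exists_max_measure _ Q (fun s => \rank (projT2 s)) n).
    by exists (existT _ 0%N (0 : 'M[K]_(0, n))) => -[].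
  by move=> [? ?] _; exact: rank_leq_col.
exists m, W => v; split => [Pv|/submxP [u ->]]; last exact: Pcomb.
apply: contraT => vW; pose W' := col_mx W v.
have QW' : Q (existT _ (m + 1)%N W').
  move=> i /=; rewrite rowE -[delta_mx _ _]hsubmxK mul_row_col; apply: PD.
    exact: Pcomb.
  by rewrite (mx11_scalar (rsubmx _)) mul_scalar_mx; apply: PZ.
have sWW' : (W <= W')%MS by rewrite -addsmxE addsmxSl.
have := Wmax _ QW'; rewrite /= leqNgt (ltn_leqif (mxrank_leqif_sup sWW')).
by rewrite -addsmxE addsmx_sub submx_refl vW.
Qed.

Definition affine n (F : 'rV[K]_n -> Prop) : Prop :=
  forall a b c (l : K), F a -> F b -> F c -> F (a + l *: (b - c)).

Lemma affine_rowspace n (F : 'rV[K]_n -> Prop) a : F a -> affine F ->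
  exists m (W : 'M[K]_(m, n)), forall w, F w <-> (w - a <= W)%MS.
Proof.
move=> Fa affF.
have [m [W hW]] : exists m (W : 'M[K]_(m, n)),
    forall v, F (a + v) <-> (v <= W)%MS.
  apply: subspace_rowspace => [|u v Fu Fv|l v Fv]; first by rewrite addr0.
    have := affF _ _ _ 1 Fu Fv Fa.
    by rewrite scale1r (addrC a v) addrK -addrA.
  by have := affF _ _ _ l Fa Fv Fa; rewrite (addrC a v) addrK.
exists m, W => w; split => [Fw|/hW]; first by apply/hW; rewrite addrC subrK.
by rewrite addrC subrK.
Qed.

(* A downward-directed family of nonempty affine subsets of a
   finite-dimensional space has a common point: a member whose direction
   space has minimal rank is contained in all the others. *)
Lemma directed_affine_meet n (J : Type) (Pj : J -> Prop)
    (F : J -> 'rV[K]_n -> Prop) :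
  (exists j, Pj j) ->
  (forall j, Pj j -> exists w, F j w) ->
  (forall j, Pj j -> affine (F j)) ->
  (forall j1 j2, Pj j1 -> Pj j2 -> exists j3, Pj j3 /\
     forall w, F j3 w -> F j1 w /\ F j2 w) ->
  exists w, forall j, Pj j -> F j w.
Proof.
move=> hne hF haff hdir.
pose Q (s : {j : J & 'rV[K]_n * {m & 'M[K]_(m, n)}}) :=
  Pj (projT1 s) /\ forall w, F (projT1 s) w <->
    (w - (projT2 s).1 <= projT2 (projT2 s).2)%MS.
have hQ j : Pj j -> exists a m (W : 'M[K]_(m, n)),
    forall w, F j w <-> (w - a <= W)%MS.
  move=> Pj_j; have [a Fa] := hF j Pj_j.
  by exists a; exact: affine_rowspace Fa (haff j Pj_j).
have [[j0 [a0 [m0 W0]]] [[/= Pj0 hW0] W0min]] : exists s, Q s /\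
    forall s', Q s' -> (\rank (projT2 (projT2 s).2) <=
                        \rank (projT2 (projT2 s').2))%N.
  apply: exists_min_measure; case: hne => j Pj_j.
  have [a [m [W hW]]] := hQ j Pj_j; by exists (existT _ j (a, existT _ m W)).
exists a0 => j Pj_j; have [j3 [Pj3 h3]] := hdir j0 j Pj0 Pj_j.
have [a3 [m3 [W3 hW3]]] := hQ j3 Pj3.
have Fa3 : F j3 a3 by apply/hW3; rewrite subrr sub0mx.
have W30 : (W3 <= W0)%MS.
  apply/row_subP => i.
  have /(h3 _)[/hW0 hi _] : F j3 (row i W3 + a3) by apply/hW3; rewrite addrK row_sub.
  have /hW0 h03 := (h3 _ Fa3).1.
  have h03' : (- (a3 - a0) <= W0)%MS by rewrite eqmx_opp.
  by have := addmx_sub hi h03'; rewrite opprB addrA subrK addrK.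
have W03 : (W0 <= W3)%MS.
  rewrite -(geq_leqif (mxrank_leqif_sup W30)).
  exact: (W0min (existT _ j3 (a3, existT _ m3 W3))).
apply: (h3 _ _).2; apply/hW3; rewrite -opprB eqmx_opp.
by apply: submx_trans W03; apply/hW0; exact: (h3 _ Fa3).1.
Qed.

Lemma fredholm_solution nn m1 m2 (B : 'M[K]_(m1, nn)) (C : 'M[K]_(m2, nn))
    (c : 'cV[K]_m1) :
  (forall (w : 'rV_m1) (a : 'rV_m2), w *m B + a *m C = 0 -> w *m c = 0) ->
  exists chi : 'cV_nn, B *m chi = c /\ C *m chi = 0.
Proof.
move=> hyp.
have hypM p (Wm : 'M_(p, m1)) (Am : 'M_(p, m2)) :
    Wm *m B + Am *m C = 0 -> Wm *m c = 0.
  move=> e; apply/row_matrixP => i; rewrite row_mul row0.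
  apply: (hyp _ (row i Am)).
  by have := congr1 (row i) e; rewrite linearD /= !row_mul row0.
set H := row_mx B^T C^T.
have : (row_mx c^T (0 : 'rV_m2) <= H)%MS.
  rewrite submxE; set Y := cokermx H.
  have HY : H *m Y = 0 by exact: mulmx_coker.
  rewrite -[Y]vsubmxK mul_row_col mul0mx addr0.
  move: HY; rewrite -[Y]vsubmxK /H mul_row_col => HY.
  have e0 : (B^T *m usubmx Y + C^T *m dsubmx Y)^T =
      (usubmx Y)^T *m B + (dsubmx Y)^T *m C.
    by rewrite linearD /= !trmx_mul !trmxK.
  have h : (usubmx Y)^T *m c = 0.
    by apply: (hypM _ _ (dsubmx Y)^T); rewrite -e0 HY trmx0.
  by apply/eqP; rewrite -[LHS]trmxK trmx_mul trmxK col_mxKu h trmx0.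
case/submxP => X e; exists X^T.
move: e; rewrite /H mul_mx_row => /eq_row_mx [e1 e2].
by rewrite -[B]trmxK -[C]trmxK -!trmx_mul -e1 -e2 trmxK trmx0.
Qed.

End LinearAlgebra.

(* Inverse limits of nonempty affine subsets.  Partial threads are grown by Zorn's lemma; finite
   dimensionality enters through [directed_affine_meet]. *)
Section InverseLimit.
Variables (K : fieldType) (I : Type) (R : I -> I -> Prop) (n : I -> nat).
Variables (G : forall i j, 'M[K]_(n j, n i)) (E : forall i, 'rV[K]_(n i) -> Prop).
Arguments G : clear implicits.
Arguments E : clear implicits.
Hypotheses (R_refl : forall i, R i i)
  (R_trans : forall i j l, R i j -> R j l -> R i l)
  (R_dir : forall i j, exists l, R i l /\ R j l)
  (G_id : forall i, G i i = 1%:M)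
  (G_comp : forall i j l, R i j -> R j l -> G j l *m G i j = G i l)
  (E_ne : forall i, exists e, E i e)
  (E_aff : forall i, affine (E i))
  (E_map : forall i j e, R i j -> E j e -> E i (e *m G i j)).

Local Open Scope classical_set_scope.

Definition ilpoint := {i : I & 'rV[K]_(n i)}.

Definition fits (A : set ilpoint) u (w : 'rV[K]_(n u)) : Prop := E u w /\
  forall x, A x -> R (projT1 x) u -> w *m G (projT1 x) u = projT2 x.
Arguments fits A u w : clear implicits.

Definition extendable (A : set ilpoint) : Prop := forall u, exists w, fits A u w.

Lemma fits_affine A u : affine (fits A u).
Proof.
move=> a b c l [Ea ha] [Eb hb] [Ec hc]; split; first exact: E_aff.
move=> x Ax Rx; rewrite mulmxDl -scalemxAl mulmxBl ha // hb // hc //.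
by rewrite subrr scaler0 addr0.
Qed.

Lemma fits_down A u l w : R u l -> fits A l w -> fits A u (w *m G u l).
Proof.
move=> Rul [Ew hw]; split; first exact: E_map.
by move=> x Ax Rx; rewrite -mulmxA G_comp //; apply: hw => //; exact: R_trans Rul.
Qed.

Lemma extendable_chain (F : set (set ilpoint)) :
  F `<=` extendable -> total_on F subset -> extendable (\bigcup_(A in F) A).
Proof.
move=> Fext Ftot u; have [hF|hF] := pselect (exists A, F A); last first.
  have [w Ew] := E_ne u; exists w; split => // x [A FA _].
  by case: hF; exists A.
have hd A1 A2 : F A1 -> F A2 -> exists A3, F A3 /\
    forall w, fits A3 u w -> fits A1 u w /\ fits A2 u w.
  move=> FA1 FA2; have [s12|s21] := Ftot A1 A2 FA1 FA2.
    exists A2; split => // w [Ew hw].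
    by split; split => // x Ax; apply: hw => //; apply: s12.
  exists A1; split => // w [Ew hw].
  by split; split => // x Ax; apply: hw => //; apply: s21.
have [w hw] := @directed_affine_meet _ (n u) _ F (fun A => fits A u) hF
  (fun A FA => Fext A FA u) (fun A _ => @fits_affine A u) hd.
exists w; split; first by case: hF => A /hw[].
by move=> x [A FA Ax]; apply: (hw A FA).2.
Qed.

Lemma extendable_add A q : extendable A ->
  exists e, extendable (A `|` [set existT _ q e]).
Proof.
move=> extA; pose C u w' := exists w, fits A u w /\ w' = w *m G q u.
have C_down u l w' : R q u -> R u l -> C l w' -> C u w'.
  move=> Rqu Rul [w [fw ->]]; exists (w *m G u l); split; first exact: fits_down.
  by rewrite -mulmxA G_comp.
have [e Ce] : exists e, forall u, R q u -> C u e.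
  apply: (@directed_affine_meet _ _ _ (R q) C); first by exists q.
  - by move=> u _; have [w fw] := extA u; exists (w *m G q u), w.
  - move=> u _ a b c l [wa [fa ->]] [wb [fb ->]] [wc [fc ->]].
    exists (wa + l *: (wb - wc)); split; first exact: fits_affine.
    by rewrite mulmxDl -scalemxAl mulmxBl.
  - move=> u1 u2 Ru1 Ru2; have [l [R1 R2]] := R_dir u1 u2.
    exists l; split; first exact: R_trans R1.
    by move=> w Cw; split; [exact: C_down Cw | exact: C_down Cw].
exists e => u; have [l [Rul Rql]] := R_dir u q.
have [w [[Ew hw] ew]] := Ce l Rql.
exists (w *m G u l); apply: fits_down => //; split => // x [/hw//|-> _].
by rewrite ew.
Qed.

(* a maximal partial thread (Zorn) has a point at every index: the limit *)
Lemma inverse_limit : exists e : forall i, 'rV[K]_(n i),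
  (forall i, E i (e i)) /\ (forall i j, R i j -> e j *m G i j = e i).
Proof.
have [A [extA Amax]] := @Zorn_bigcup _ extendable extendable_chain.
have Afull q : exists v, A (existT _ q v).
  apply: contrapT => Aq; have [e exte] := extendable_add q extA.
  apply: (Amax _ _ exte); split => [x Ax|sub]; first by left.
  by apply: Aq; exists e; apply: sub; right.
pose e q := projT1 (cid (Afull q)).
have eA q : A (existT _ q (e q)) by rewrite /e; case: cid.
have fit j : fits A j (e j).
  have [w [Ew hw]] := extA j.
  have <- : w = e j by rewrite -[w]mulmx1 -G_id; exact: (hw _ (eA j) (R_refl j)).
  by split.
exists e; split => [i|i j Rij]; first by case: (fit i).
by case: (fit j) => _ /(_ (existT _ i (e i)) (eA i) Rij).
Qed.

End InverseLimit.

Section MonotoneChain.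
Variables (K : fieldType) (d0 : Order.disp_t) (I : orderType d0) (n : nat).
Variables (m : I -> nat) (F : forall s : I, 'M[K]_(m s, n)) (P : I -> Prop).
Hypothesis mono : forall s s', P s -> P s' -> (s <= s')%O -> (F s <= F s')%MS.
Hypothesis Pne : exists s, P s.

Lemma chain_least : exists s0, P s0 /\ forall s, P s -> (F s0 <= F s)%MS.
Proof.
have [s0 [Ps0 hmin]] := exists_min_measure (fun s => \rank (F s)) Pne.
exists s0; split => // s Ps; case/orP: (le_total s0 s) => h; first exact: mono.
by rewrite -(geq_leqif (mxrank_leqif_sup (mono Ps Ps0 h))); apply: hmin.
Qed.

Lemma chain_greatest : exists s0, P s0 /\ forall s, P s -> (F s <= F s0)%MS.
Proof.
have [s0 [Ps0 hmax]] := @exists_max_measure _ P (fun s => \rank (F s)) n Pne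
  (fun s _ => rank_leq_col (F s)).
exists s0; split => // s Ps; case/orP: (le_total s s0) => h; first exact: mono.
by rewrite -(geq_leqif (mxrank_leqif_sup (mono Ps0 Ps h))); apply: hmax.
Qed.
End MonotoneChain.

(* A nonzero retract of an indecomposable module is isomorphic to it: if
   g f = 1 for natural f : M -> N, g : N -> M, then the complementary
   idempotent 1 - f g splits off a complement of N in M. *)
Section Retract.
Variables (k : fieldType) (dS dT : Order.disp_t) (S : orderType dS) (T : orderType dT).

Section Complement.
Variables (M N : pfdMod k S T).
Variables (f : forall p, 'M[k]_(pdim M p, pdim N p)) (g : forall p, 'M[k]_(pdim N p, pdim M p)).
Hypotheses (fnat : forall p q, ple p q -> pmap M p q *m f q = f p *m pmap N p q)
  (gnat : forall p q, ple p q -> pmap N p q *m g q = g p *m pmap M p q)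
  (gf : forall p, g p *m f p = 1%:M).

Let Q p : 'M[k]_(pdim M p) := 1%:M - f p *m g p.
Let Kb p := row_base (Q p).
Let Kp p := Q p *m pinvmx (Kb p).

Let Qf p : Q p *m f p = 0.
Proof. by rewrite /Q mulmxBl mul1mx -mulmxA gf mulmx1 subrr. Qed.
Let gQ p : g p *m Q p = 0.
Proof. by rewrite /Q mulmxBr mulmx1 mulmxA gf mul1mx subrr. Qed.
Let QQ p : Q p *m Q p = Q p.
Proof. by rewrite {1}/Q mulmxBl mul1mx -mulmxA gQ mulmx0 subr0. Qed.
Let KbQ p : exists X, Kb p = X *m Q p.
Proof. by apply/submxP; rewrite /Kb eq_row_base. Qed.
Let Kbf p : Kb p *m f p = 0.
Proof. by case: (KbQ p) => X ->; rewrite -mulmxA Qf mulmx0. Qed.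
Let KbQK p : Kb p *m Q p = Kb p.
Proof. by case: (KbQ p) => X ->; rewrite -mulmxA QQ. Qed.
Let gKp p : g p *m Kp p = 0.
Proof. by rewrite /Kp mulmxA gQ mul0mx. Qed.
Let KpKb p : Kp p *m Kb p = Q p.
Proof. by rewrite /Kp mulmxKpV // /Kb eq_row_base. Qed.
Let KbKp p : Kb p *m Kp p = 1%:M.
Proof.
apply: (row_free_inj (row_base_free (Q p))); rewrite /= mul1mx.
by rewrite -mulmxA KpKb KbQK.
Qed.

Definition compl_map p q := Kb p *m pmap M p q *m Kp q.

Lemma compl_map_id p : compl_map p p = 1%:M.
Proof. by rewrite /compl_map pmap_id mulmx1 KbKp. Qed.

Lemma compl_map_comp p q r : ple p q -> ple q r ->
  compl_map p q *m compl_map q r = compl_map p r.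
Proof.
move=> hpq hqr; rewrite /compl_map.
have -> : Kb p *m pmap M p q *m Kp q *m (Kb q *m pmap M q r *m Kp r) =
  Kb p *m pmap M p q *m (Kp q *m Kb q) *m pmap M q r *m Kp r by rewrite !mulmxA.
rewrite KpKb /Q mulmxBr mulmx1 !mulmxBl -(mulmxA (Kb p)) (pmap_comp M hpq hqr).
rewrite (mulmxA _ (f q)) -(mulmxA (Kb p) (pmap M p q) (f q)) fnat //.
by rewrite mulmxA Kbf !mul0mx subr0.
Qed.

Definition compl_mod : pfdMod k S T := PfdMod compl_map_id compl_map_comp.

Lemma retract_decomp : mod_iso M (dsum N compl_mod).
Proof.
exists (fun p => row_mx (f p) (Kp p)), (fun p => col_mx (g p) (Kb p)); split.
  move=> p; split; first by rewrite mul_row_col KpKb /Q addrC subrK.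
  by rewrite mul_col_row gf gKp Kbf KbKp -scalar_mx_block.
move=> p q hpq; rewrite /= /dsum_map mul_row_block mul_mx_row !mulmx0 !addr0 add0r.
rewrite fnat //; congr row_mx.
rewrite /= /compl_map (mulmxA (Kp p)) (mulmxA (Kp p)) KpKb /Q mulmxBl mul1mx.
rewrite mulmxBl -(mulmxA (f p) (g p)) -gnat //.
rewrite -(mulmxA (f p) (pmap N p q *m g q) (Kp q)) -(mulmxA (pmap N p q) (g q)).
by rewrite gKp !mulmx0 subr0.
Qed.
End Complement.

Lemma indecomposable_retract_iso (M N : pfdMod k S T)
  (f : forall p, 'M[k]_(pdim M p, pdim N p)) (g : forall p, 'M[k]_(pdim N p, pdim M p)) :
  (forall p q, ple p q -> pmap M p q *m f q = f p *m pmap N p q) ->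
  (forall p q, ple p q -> pmap N p q *m g q = g p *m pmap M p q) ->
  (forall p, g p *m f p = 1%:M) ->
  ~ zero_mod N -> indecomposable M -> mod_iso M N.
Proof.
move=> fnat gnat gf nN [_ hind].
case: (hind _ _ (retract_decomp fnat gnat gf)) => // hK.
exists f, g; split => // p; split => //.
have : \rank (1%:M - f p *m g p) = 0%N by exact: hK.
by move/eqP; rewrite mxrank_eq0 subr_eq0 => /eqP <-.
Qed.
End Retract.

(* Matrices between the spaces k^b, b : bool, of a block module k_B: [kmx]
   is the structure map of k_B, and a row vector X (resp. column vector Y)
   is seen as a map k^b -> k^m (resp. k^m -> k^b). *)
Section BoolMatrices.
Variable K : fieldType.

Lemma flatb_eq (b : bool) m (X Y : 'M[K]_(nat_of_bool b, m)) : b = false -> X = Y.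
Proof. by case: b X Y => // X Y _; rewrite [X]flatmx0 [Y]flatmx0. Qed.

Definition kmx (b1 b2 : bool) : 'M[K]_(nat_of_bool b1, nat_of_bool b2) :=
  \matrix_(i, j) (if b1 && b2 then 1 else 0).
Definition row_on (b : bool) m (X : 'rV[K]_m) : 'M[K]_(nat_of_bool b, m) :=
  \matrix_(a, c) X 0 c.
Definition col_on (b : bool) m (Y : 'cV[K]_m) : 'M[K]_(m, nat_of_bool b) :=
  \matrix_(a, c) Y a 0.

Lemma kmx_row_on (b1 b2 : bool) m (X : 'rV[K]_m) : b1 -> b2 ->
  kmx b1 b2 *m row_on b2 X = row_on b1 X.
Proof.
case: b1; case: b2 => // _ _; apply/matrixP => a c.
by rewrite !mxE big_ord1 !mxE mul1r.
Qed.

Lemma col_on_kmx (b1 b2 : bool) m (Y : 'cV[K]_m) : b1 -> b2 ->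
  col_on b1 Y *m kmx b1 b2 = col_on b2 Y.
Proof.
case: b1; case: b2 => // _ _; apply/matrixP => a c.
by rewrite !mxE big_ord1 !mxE mulr1.
Qed.

Lemma row_on_mul b m p (X : 'rV[K]_m) (B : 'M[K]_(m, p)) :
  row_on b X *m B = row_on b (X *m B).
Proof. by apply/matrixP => a c; rewrite !mxE; apply: eq_bigr => l _; rewrite mxE. Qed.

Lemma mul_col_on b m p (Y : 'cV[K]_m) (B : 'M[K]_(p, m)) :
  B *m col_on b Y = col_on b (B *m Y).
Proof. by apply/matrixP => a c; rewrite !mxE; apply: eq_bigr => l _; rewrite mxE. Qed.

Lemma col_on0 b m : col_on b (0 : 'cV[K]_m) = 0.
Proof. by apply/matrixP => a c; rewrite !mxE. Qed.

Lemma row_on_col_on (b : bool) m (X : 'rV[K]_m) (Y : 'cV[K]_m) : b ->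
  X *m Y = 1%:M -> row_on b X *m col_on b Y = 1%:M.
Proof.
case: b => // _ e; apply/matrixP => a c; rewrite !ord1.
have := congr1 (fun N : 'M[K]_1 => N 0 0) e; rewrite /= !mxE => <-.
by apply: eq_bigr => l _; rewrite !mxE.
Qed.
End BoolMatrices.

Section ProductOrder.
Variables (dS dT : Order.disp_t) (S : orderType dS) (T : orderType dT).

Lemma pleE (a c : S) (b e : T) : ple (a, b) (c, e) = (a <= c)%O && (b <= e)%O.
Proof. by []. Qed.

Lemma ple_refl (p : S * T) : ple p p.
Proof. by rewrite /ple !lexx. Qed.

Lemma ple_trans (p q r : S * T) : ple p q -> ple q r -> ple p r.
Proof.
by rewrite /ple => /andP [a b] /andP [c e]; rewrite (le_trans a c) (le_trans b e).
Qed.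

Lemma ple_upper (p q : S * T) : exists l, ple p l /\ ple q l.
Proof.
case: p q => [p1 p2] [q1 q2]; exists (Order.max p1 q1, Order.max p2 q2).
by rewrite !pleE !le_max !lexx !orbT.
Qed.
End ProductOrder.

Section BlockConstruction.
Variables (k : fieldType) (dS dT : Order.disp_t) (S : orderType dS) (T : orderType dT).
Variable M : pfdMod k S T.
Local Notation A := (pmap M).
Local Notation n := (pdim M).

Lemma image_mono p q r : ple p q -> ple q r -> (A p r <= A q r)%MS.
Proof. by move=> hpq hqr; rewrite -(pmap_comp M hpq hqr) submxMl. Qed.

Hypothesis hME : middle_exact M.

Lemma middle_lift (s s' : S) (t t' : T) (v : 'rV[k]_(n (s, t')))
    (w : 'rV[k]_(n (s', t))) :
  (s <= s')%O -> (t <= t')%O -> v *m A (s, t') (s', t') = w *m A (s', t) (s', t') ->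
  exists u : 'rV[k]_(n (s, t)), v = u *m A (s, t) (s, t') /\ w = u *m A (s, t) (s', t).
Proof.
move=> h1 h2 e; have /= /(_ v w) [H _] := hME h1 h2; apply: H.
by rewrite /sq_diff e subrr.
Qed.

Variables (x x' : S) (y y' : T).
Hypotheses (hx : (x <= x')%O) (hy : (y <= y')%O).
Local Notation d := (x', y').

Definition join_d (p : S * T) := (Order.max p.1 x', Order.max p.2 y').
Definition meet_d (p : S * T) := (Order.min p.1 x', Order.min p.2 y').

Lemma ple_join_d p : ple p (join_d p).
Proof. by rewrite /ple /= !le_max !lexx. Qed.

Lemma ple_d_join_d p : ple d (join_d p).
Proof. by rewrite /ple /= !le_max !lexx !orbT. Qed.

Lemma join_d_mono p q : ple p q -> ple (join_d p) (join_d q).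
Proof.
by rewrite /ple /= => /andP [a b]; rewrite !ge_max !le_max !lexx !orbT a b.
Qed.

Lemma ple_meet_d p : ple (meet_d p) p.
Proof. by rewrite /ple /= !ge_min !lexx. Qed.

Lemma ple_meet_d_d p : ple (meet_d p) d.
Proof. by rewrite /ple /= !ge_min !lexx !orbT. Qed.
Definition U := (A (x, y') d + A (x', y) d)%MS.
Hypothesis U_proper : ~~ row_full U.

Definition JS (s : S) : bool := (x' < s)%O || ~~ (A (s, y') d <= U)%MS.

Lemma JS_up : up_closed JS.
Proof.
move=> s s'; rewrite !unfold_in /JS => /orP [h|h] hss'.
  by rewrite (lt_le_trans h hss').
case: (ltP x' s') => //= hs'; apply: contra h => /(submx_trans _); apply.
by apply: image_mono; rewrite pleE ?hss' ?hs' lexx.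
Qed.

Lemma JS_x' : JS x'.
Proof. by rewrite /JS ltxx /= pmap_id sub1mx. Qed.

Lemma JS_x : ~~ JS x.
Proof. by rewrite /JS negb_or -leNgt hx addsmxSl. Qed.

Lemma notJS s : ~~ JS s -> (s <= x')%O /\ (A (s, y') d <= U)%MS.
Proof. by rewrite /JS negb_or -leNgt negbK => /andP. Qed.

Lemma exists_s1 : exists s1, (JS s1 && (s1 <= x')%O) /\
  forall s, JS s && (s <= x')%O -> (A (s1, y') d <= A (s, y') d)%MS.
Proof.
apply: chain_least; last by exists x'; rewrite JS_x' lexx.
move=> s s' _ /andP [_ hs'] hss'; apply: image_mono; by rewrite pleE ?hss' ?hs' lexx.
Qed.

Section FirstCoordinate.
Variable s1 : S.
Hypotheses (JSs1 : JS s1) (s1x : (s1 <= x')%O)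
  (s1min : forall s, JS s && (s <= x')%O -> (A (s1, y') d <= A (s, y') d)%MS).
Local Notation V1 := (A (s1, y') d).

Lemma V1_notU : ~~ (V1 <= U)%MS.
Proof. by move: JSs1; rewrite /JS ltNge s1x. Qed.

Lemma image_b_V1 : (A (x, y') d <= V1)%MS.
Proof.
have xs1 : (x <= s1)%O by rewrite leNgt; apply: contra JS_x => /ltW; exact: JS_up.
by apply: image_mono; rewrite pleE ?xs1 ?s1x lexx.
Qed.

Definition JT (t : T) : bool := (y' < t)%O || ~~ ((V1 :&: A (x', t) d) <= U)%MS.

Lemma JT_up : up_closed JT.
Proof.
move=> t t'; rewrite !unfold_in /JT => /orP [h|h] htt'.
  by rewrite (lt_le_trans h htt').
case: (ltP y' t') => //= ht'; apply: contra h => /(submx_trans _); apply.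
by apply: capmxS => //; apply: image_mono; rewrite pleE ?htt' ?ht' lexx.
Qed.

Lemma JT_y' : JT y'.
Proof.
rewrite /JT ltxx /= pmap_id; apply: contra V1_notU => /(submx_trans _); apply.
by rewrite sub_capmx submx_refl submx1.
Qed.

Lemma JT_y : ~~ JT y.
Proof.
rewrite /JT negb_or -leNgt hy negbK /=.
by apply: submx_trans (capmxSr _ _) _; exact: addsmxSr.
Qed.

Lemma notJT t : ~~ JT t -> (t <= y')%O /\ ((V1 :&: A (x', t) d) <= U)%MS.
Proof. by rewrite /JT negb_or -leNgt negbK => /andP. Qed.

Lemma exists_t1 : exists t1, (JT t1 && (t1 <= y')%O) /\
  forall t, JT t && (t <= y')%O ->
    ((V1 :&: A (x', t1) d) <= (V1 :&: A (x', t) d))%MS.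
Proof.
apply: chain_least; last by exists y'; rewrite JT_y' lexx.
move=> t t' _ /andP [_ ht'] htt'; apply: capmxS => //.
by apply: image_mono; rewrite pleE ?htt' ?ht' lexx.
Qed.

Lemma exists_t0 : exists t0, ~~ JT t0 /\
  forall t, ~~ JT t -> (A (x', t) d <= A (x', t0) d)%MS.
Proof.
apply: chain_greatest; last by exists y; exact: JT_y.
move=> t t' _ /notJT [ht' _] htt'; apply: image_mono;
by rewrite pleE ?htt' ?ht' lexx.
Qed.

Section SecondCoordinate.
Variables t1 t0 : T.
Hypotheses (JTt1 : JT t1) (t1y : (t1 <= y')%O)
  (t1min : forall t, JT t && (t <= y')%O ->
     ((V1 :&: A (x', t1) d) <= (V1 :&: A (x', t) d))%MS)
  (nJTt0 : ~~ JT t0)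
  (t0max : forall t, ~~ JT t -> (A (x', t) d <= A (x', t0) d)%MS).
Local Notation V2 := (V1 :&: A (x', t1) d)%MS.

Definition W := (U + A (x', t0) d)%MS.

Lemma V2_notU : ~~ (V2 <= U)%MS.
Proof. by move: JTt1; rewrite /JT ltNge t1y. Qed.

(* the key point: V2 is not contained in W (modular law, using that V1
   contains the image of M_b) *)
Lemma V2_notW : ~~ (V2 <= W)%MS.
Proof.
apply: contra V2_notU => V2W.
have [t2 [nt2 [ht0 hyt]]] : exists t2, ~~ JT t2 /\
    (A (x', t0) d <= A (x', t2) d)%MS /\ (A (x', y) d <= A (x', t2) d)%MS.
  have [t0y' _] := notJT nJTt0.
  case/orP: (le_total y t0) => h.
    by exists t0; do 2 split => //; apply: image_mono; rewrite pleE ?h ?t0y' lexx.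
  exists y; split; first exact: JT_y.
  by split => //; apply: image_mono; rewrite pleE ?h ?hy lexx.
have WW2 : (W <= A (x, y') d + A (x', t2) d)%MS.
  rewrite /W /U addsmx_sub addsmxS //=; exact: submx_trans ht0 (addsmxSr _ _).
have h1 : (V2 <= (A (x, y') d + A (x', t2) d) :&: V1)%MS.
  by rewrite sub_capmx capmxSl andbT; exact: submx_trans V2W WW2.
rewrite -(matrix_modl _ image_b_V1) in h1.
apply: submx_trans h1 _; rewrite addsmx_sub addsmxSl /= capmxC.
by case: (notJT nt2).
Qed.

Lemma separating_functional : exists (v2 : 'rV[k]_(n d)) (phi : 'cV[k]_(n d)),
  (v2 <= V2)%MS /\ W *m phi = 0 /\ v2 *m phi = 1%:M.
Proof.
case/row_subPn: V2_notW => i hi.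
set v2 := row i V2; set C := cokermx W; set c := v2 *m C.
have [j cj] : exists j, c 0 j != 0.
  apply/existsP; apply: contraR hi; rewrite negb_exists => /forallP h.
  rewrite submxE -/C -/c; apply/eqP/matrixP => a b; rewrite ord1 [RHS]mxE.
  by move: (h b); rewrite negbK => /eqP.
exists v2, ((c 0 j)^-1 *: (C *m delta_mx j 0)); split; first exact: row_sub.
split; first by rewrite -scalemxAr mulmxA mulmx_coker mul0mx scaler0.
rewrite -scalemxAr mulmxA -/c -colE; apply/matrixP => a b; rewrite !ord1.
by rewrite [LHS]mxE [RHS]mxE eqxx /= [col j c 0 0]mxE mulVf.
Qed.

Section Separation.
Variables (v2 : 'rV[k]_(n d)) (phi : 'cV[k]_(n d)).
Hypotheses (v2V2 : (v2 <= V2)%MS) (Wphi : W *m phi = 0) (v2phi : v2 *m phi = 1%:M).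

Lemma v2_lifts s t : JS s -> (s <= x')%O -> JT t -> (t <= y')%O ->
  exists u : 'rV[k]_(n (s, t)), u *m A (s, t) d = v2.
Proof.
move=> Js sx Jt ty.
have v2t : (v2 <= V1 :&: A (x', t) d)%MS.
  by apply: submx_trans v2V2 _; apply: t1min; rewrite Jt ty.
have /submxP [a1 e1] : (v2 <= A (s, y') d)%MS.
  by apply: submx_trans (submx_trans v2t (capmxSl _ _)) (s1min _); rewrite Js sx.
have /submxP [a2 e2] : (v2 <= A (x', t) d)%MS := submx_trans v2t (capmxSr _ _).
have [u [ea _]] : exists u, a1 = u *m A (s, t) (s, y') /\ a2 = u *m A (s, t) (x', t).
  by apply: middle_lift => //; rewrite -e1 -e2.
by exists u; rewrite e1 ea -mulmxA pmap_comp // pleE ?sx ?ty lexx.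
Qed.

Lemma phi_kills_W (w : 'rV[k]_(n d)) : (w <= W)%MS -> w *m phi = 0.
Proof. by case/submxP=> c ->; rewrite -mulmxA Wphi mulmx0. Qed.

(* phi kills every w in M_d whose image at r >= d comes from points
   (s, r.2) and (r.1, t) outside the block: by middle exactness such a w is
   in W *)
Lemma phi_kills_outside (r1 : S) (r2 : T) s t (w : 'rV[k]_(n d))
    (a : 'rV[k]_(n (s, r2))) (b : 'rV[k]_(n (r1, t))) :
  ple d (r1, r2) -> ~~ JS s -> ~~ JT t ->
  w *m A d (r1, r2) = a *m A (s, r2) (r1, r2) + b *m A (r1, t) (r1, r2) ->
  w *m phi = 0.
Proof.
rewrite pleE => /andP [h1 h2] nJs nJt e.
have [sx Us] := notJS nJs; have [ty _] := notJT nJt.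
have sr1 : (s <= r1)%O := le_trans sx h1.
have tr2 : (t <= r2)%O := le_trans ty h2.
set a' := a *m A (s, r2) (x', r2); set b' := b *m A (r1, t) (r1, y').
have e' : (w *m A d (x', r2) - a') *m A (x', r2) (r1, r2) = b' *m A (r1, y') (r1, r2).
  rewrite mulmxBl -!mulmxA !pmap_comp ?pleE ?h1 ?h2 ?sx ?ty ?tr2 ?sr1 ?lexx // e.
  by rewrite addrC addKr.
have [u [eu1 eu2]] := middle_lift h1 h2 e'.
have [u0 [eu0 _]] : exists u0, u = u0 *m A (x', t) (x', y') /\
    b = u0 *m A (x', t) (r1, t).
  by apply: middle_lift => //; rewrite -eu2.
have e2 : a *m A (s, r2) (x', r2) = (w - u) *m A (x', y') (x', r2).
  by rewrite mulmxBl -eu1 /a' opprB addrC subrK.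
have [u1 [_ eu1']] := middle_lift sx h2 e2.
apply: phi_kills_W; rewrite -[w](subrK u) /W; apply: addmx_sub_adds.
  by rewrite eu1'; apply: submx_trans Us; exact: submxMl.
by rewrite eu0; apply: submx_trans (t0max nJt); exact: submxMl.
Qed.

Definition cosection_cond (r : S * T) (e : 'rV[k]_(n r)) : Prop := ple d r ->
  [/\ A d r *m e^T = phi, (forall s, ~~ JS s -> A (s, r.2) r *m e^T = 0)
    & (forall t, ~~ JT t -> A (r.1, t) r *m e^T = 0)].

(* existence by the Fredholm alternative: the relations to respect are
   exactly those killed by [phi_kills_outside] *)
Lemma cosection_exists r : exists e : 'rV[k]_(n r), cosection_cond e.
Proof.
case: (boolP (ple d r)) => hdr; last by exists 0 => h; rewrite h in hdr.
case: r hdr => r1 r2 hdr; move: (hdr); rewrite pleE => /andP [h1 h2].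
have [s0 [ns0 s0max]] : exists s0, ~~ JS s0 /\
    forall s, ~~ JS s -> (A (s, r2) (r1, r2) <= A (s0, r2) (r1, r2))%MS.
  apply: chain_greatest; last by exists x; exact: JS_x.
  move=> s s' _ /notJS [s'x _] hss'; apply: image_mono;
  by rewrite pleE ?hss' ?(le_trans s'x h1) lexx.
have [t0' [nt0 t0max']] : exists t0', ~~ JT t0' /\
    forall t, ~~ JT t -> (A (r1, t) (r1, r2) <= A (r1, t0') (r1, r2))%MS.
  apply: chain_greatest; last by exists y; exact: JT_y.
  move=> t t' _ /notJT [t'y _] htt'; apply: image_mono;
  by rewrite pleE ?htt' ?(le_trans t'y h2) lexx.
have [chi [e1 e2]] : exists chi, A d (r1, r2) *m chi = phi /\
    col_mx (A (s0, r2) (r1, r2)) (A (r1, t0') (r1, r2)) *m chi = 0.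
  apply: fredholm_solution => w a; rewrite -[a]hsubmxK mul_row_col.
  move=> /eqP; rewrite addr_eq0 => /eqP e.
  apply: (phi_kills_outside (a := - lsubmx a) (b := - rsubmx a) hdr ns0 nt0).
  by rewrite e opprD !mulNmx.
move: e2; rewrite mul_col_mx -[0 : 'cV__]col_mx0 => /eq_col_mx [e2 e3].
exists chi^T => _; rewrite trmxK; split => //= [s ns|t nt].
  by have /submxP [X ->] := s0max s ns; rewrite -mulmxA e2 mulmx0.
by have /submxP [X ->] := t0max' t nt; rewrite -mulmxA e3 mulmx0.
Qed.

Lemma cosection_cond_affine r : affine (@cosection_cond r).
Proof.
move=> a b c l ha hb hc hd; case: (ha hd) => a1 a2 a3; case: (hb hd) => b1 b2 b3.
case: (hc hd) => c1 c2 c3; rewrite linearD linearZ /= linearB /=.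
split => [|s ns|t nt]; rewrite !mulmxDr -!scalemxAr !mulmxBr.
- by rewrite a1 b1 c1 subrr scaler0 addr0.
- by rewrite a2 // b2 // c2 // subrr scaler0 addr0.
- by rewrite a3 // b3 // c3 // subrr scaler0 addr0.
Qed.

Lemma cosection_cond_map i j (e : 'rV[k]_(n j)) : ple i j ->
  cosection_cond e -> cosection_cond (e *m (A i j)^T).
Proof.
move=> hij he hdi; have hdj := ple_trans hdi hij.
have [e1 e2 e3] := he hdj; rewrite trmx_mul trmxK.
have /andP [ij1 ij2] := hij; have /andP [dj1 dj2] := hdj; have /andP [di1 di2] := hdi.
split => [|s ns|t nt]; first by rewrite mulmxA pmap_comp.
- have [sx _] := notJS ns.
  have hs : ple (s, i.2) (s, j.2) by rewrite /ple /= lexx.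
  have hsj : ple (s, j.2) j by rewrite /ple /= lexx andbT (le_trans sx dj1).
  have hsi : ple (s, i.2) i by rewrite /ple /= lexx andbT (le_trans sx di1).
  by rewrite mulmxA pmap_comp // -(pmap_comp M hs hsj) -mulmxA e2 // mulmx0.
- have [ty _] := notJT nt.
  have ht : ple (i.1, t) (j.1, t) by rewrite /ple /= lexx andbT.
  have htj : ple (j.1, t) j by rewrite /ple /= lexx (le_trans ty dj2).
  have hti : ple (i.1, t) i by rewrite /ple /= lexx (le_trans ty di2).
  by rewrite mulmxA pmap_comp // -(pmap_comp M ht htj) -mulmxA e3 // mulmx0.
Qed.

Lemma cosection_family : exists chi : forall r, 'rV[k]_(n r),
  (forall r, cosection_cond (chi r)) /\
  (forall i j, ple i j -> chi j *m (A i j)^T = chi i).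
Proof.
apply: (@inverse_limit _ _ (fun i j => ple i j) n (fun i j => (A i j)^T) (@cosection_cond)).
- exact: ple_refl.
- exact: ple_trans.
- exact: ple_upper.
- by move=> i; rewrite pmap_id trmx1.
- by move=> i j l hij hjl; rewrite -trmx_mul pmap_comp.
- exact: cosection_exists.
- exact: cosection_cond_affine.
- by move=> i j e hij; exact: cosection_cond_map.
Qed.

Definition bpoint := {p : S * T | inB JS JT p}.
Definition section_cond (p : bpoint) (e : 'rV[k]_(n (val p))) : Prop :=
  ple (val p) d -> e *m A (val p) d = v2.

Lemma inB_meet (p q : S * T) : inB JS JT p -> inB JS JT q ->
  inB JS JT (Order.min p.1 q.1, Order.min p.2 q.2).
Proof.
case: p q => [p1 p2] [q1 q2]; rewrite /inB /= => /andP [a b] /andP [c e].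
by apply/andP; split; rewrite minEle; case: ifP.
Qed.

(* a compatible family of sections over the block, which is directed
   downwards: the inverse limit is taken along the reversed order *)
Lemma section_family : exists iv : forall p : bpoint, 'rV[k]_(n (val p)),
  (forall p, section_cond (iv p)) /\
  (forall p q, ple (val p) (val q) -> iv p *m A (val p) (val q) = iv q).
Proof.
have [iv [h1 h2]] : exists iv : forall p : bpoint, 'rV[k]_(n (val p)),
    (forall p, section_cond (iv p)) /\
    (forall p q, ple (val q) (val p) -> iv q *m A (val q) (val p) = iv p).
  apply: (@inverse_limit _ bpoint (fun p q => ple (val q) (val p))
    (fun p => n (val p)) (fun p q => A (val q) (val p)) (@section_cond)).
  - by move=> p; exact: ple_refl.
  - by move=> i j l hij hjl; exact: ple_trans hjl hij.
  - move=> [p hp] [q hq]; exists (exist (fun r => inB JS JT r) _ (inB_meet hp hq)).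
    by rewrite /ple /= !ge_min !lexx !orbT.
  - by move=> i; rewrite pmap_id.
  - by move=> i j l hij hjl; rewrite pmap_comp.
  - move=> [[s t] hp]; case: (boolP (ple (s, t) d)) => hd; last first.
      by exists 0 => h; rewrite h in hd.
    have /andP [Js Jt] : (s \in JS) && (t \in JT) := hp.
    move: hd; rewrite pleE => /andP [sx ty].
    by have [u hu] := v2_lifts Js sx Jt ty; exists u.
  - move=> i a b c l ha hb hc hd.
    by rewrite mulmxDl -scalemxAl mulmxBl ha // hb // hc // subrr scaler0 addr0.
  - move=> i j e hij he hdi; have hdj := ple_trans hij hdi.
    by rewrite -mulmxA pmap_comp // he.
by exists iv; split => // p q hpq; apply: h2.
Qed.

Section Retraction.
Variables (chi : forall r, 'rV[k]_(n r)) (iv : forall p : bpoint, 'rV[k]_(n (val p))).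
Hypotheses (chi_cond : forall r, cosection_cond (chi r))
  (chi_nat : forall i j, ple i j -> chi j *m (A i j)^T = chi i)
  (iv_cond : forall p, section_cond (iv p))
  (iv_nat : forall p q, ple (val p) (val q) -> iv p *m A (val p) (val q) = iv q).

Local Notation inBlock := (inB JS JT).

Lemma inBlock_up p q : ple p q -> inBlock p -> inBlock q.
Proof. by move=> hpq; apply/implyP/(inB_up JS_up JT_up hpq). Qed.

Definition pi p : 'cV[k]_(n p) := A p (join_d p) *m (chi (join_d p))^T.

Lemma pi_nat p q : ple p q -> A p q *m pi q = pi p.
Proof.
move=> hpq; have chi_nat' i j : ple i j -> A i j *m (chi j)^T = (chi i)^T.
  by move=> hij; rewrite -(chi_nat hij) trmx_mul trmxK.
rewrite /pi mulmxA (pmap_comp M hpq (ple_join_d q)).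
by rewrite -(pmap_comp M (ple_join_d p) (join_d_mono hpq)) -mulmxA (chi_nat' _ _ (join_d_mono hpq)).
Qed.

(* outside the block, pi factors through a point killed by the cosection *)
Lemma pi_outside p : ~~ inBlock p -> pi p = 0.
Proof.
case: p => p1 p2; rewrite /inB negb_and /= => hp.
have [_ e2 e3] := chi_cond (ple_d_join_d (p1, p2)); rewrite /pi.
case/orP: hp => hp.
  have [sx _] := notJS hp.
  have h1 : ple (p1, p2) (p1, (join_d (p1, p2)).2) by rewrite /ple /= lexx le_max lexx.
  have h2 : ple (p1, (join_d (p1, p2)).2) (join_d (p1, p2)).
    by rewrite /ple /= lexx le_max sx orbT.
  by rewrite -(pmap_comp M h1 h2) -mulmxA e2 // mulmx0.
have [ty _] := notJT hp.
have h1 : ple (p1, p2) ((join_d (p1, p2)).1, p2) by rewrite /ple /= lexx le_max lexx.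
have h2 : ple ((join_d (p1, p2)).1, p2) (join_d (p1, p2)).
  by rewrite /ple /= lexx le_max ty orbT.
by rewrite -(pmap_comp M h1 h2) -mulmxA e3 // mulmx0.
Qed.

(* the sections, extended by zero outside the block *)
Definition ivec p : 'rV[k]_(n p) :=
  (if inBlock p as b return inBlock p = b -> 'rV[k]_(n p)
   then fun h => iv (exist (fun r => inBlock r) p h) else fun _ => 0) erefl.

Lemma ivecE p (h : inBlock p) : ivec p = iv (exist (fun r => inBlock r) p h).
Proof.
rewrite /ivec; move: (erefl (inBlock p)); rewrite {2 3}h => h'.
by rewrite (eq_irrelevance h h').
Qed.

Lemma ivec_nat p q : ple p q -> inBlock p -> ivec p *m A p q = ivec q.
Proof.
move=> hpq hp; have hq := inBlock_up hpq hp.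
by rewrite (ivecE hp) (ivecE hq) (@iv_nat (exist _ p hp) (exist _ q hq) hpq).
Qed.

(* in the block, pi p (ivec p) = 1: go down to the meet with d, where the
   section maps to v2 and the cosection restricts to phi *)
Lemma ivec_pi p : inBlock p -> ivec p *m pi p = 1%:M.
Proof.
move=> hp; have hm : inBlock (meet_d p).
  case: p hp => p1 p2 /andP [a b]; apply/andP; rewrite /= !minEle.
  have JSx' : x' \in JS := JS_x'; have JTy' : y' \in JT := JT_y'.
  by split; case: ifP.
rewrite -(ivec_nat (ple_meet_d p) hm) (ivecE hm) /pi.
have [e1 _ _] := chi_cond (ple_d_join_d p).
rewrite -mulmxA (mulmxA (A _ p)) (pmap_comp M (ple_meet_d p) (ple_join_d p)).
rewrite -(pmap_comp M (ple_meet_d_d p) (ple_d_join_d p)) -mulmxA e1 mulmxA.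
by rewrite (@iv_cond (exist (fun r => inBlock r) _ hm) (ple_meet_d_d p)) v2phi.
Qed.

(* col_on pi : M -> k_B and row_on ivec : k_B -> M form a retraction *)
Lemma block_retract_iso : indecomposable M -> mod_iso M (kB k JS_up JT_up).
Proof.
apply: (@indecomposable_retract_iso _ _ _ _ _ M (kB k JS_up JT_up)
  (fun p => col_on (inBlock p) (pi p)) (fun p => row_on (inBlock p) (ivec p))).
- move=> p q hpq /=; rewrite /kB_map -/(kmx _ _) mul_col_on pi_nat //.
  case: (boolP (inBlock p)) => hp; first by rewrite col_on_kmx // (inBlock_up hpq hp).
  by rewrite (pi_outside hp) !col_on0 mul0mx.
- move=> p q hpq /=; rewrite /kB_map -/(kmx _ _).
  case: (boolP (inBlock p)) => hp; last by apply: flatb_eq; apply/negbTE.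
  by rewrite kmx_row_on ?(inBlock_up hpq hp) // row_on_mul ivec_nat.
- move=> p; case/orP: (orbN (inBlock p)) => hp; last by apply: flatb_eq; apply/negbTE.
  by apply: row_on_col_on => //; exact: ivec_pi.
- have JSx' : x' \in JS := JS_x'; have JTy' : y' \in JT := JT_y'.
  by move=> /(_ d) /=; rewrite /inB /= JSx' JTy'.
Qed.
End Retraction.

Lemma separation_block_iso : indecomposable M -> mod_iso M (kB k JS_up JT_up).
Proof.
have [chi [chi_cond chi_nat]] := cosection_family.
have [iv [iv_cond iv_nat]] := section_family.
exact: block_retract_iso chi_cond chi_nat iv_cond iv_nat.
Qed.
End Separation.
End SecondCoordinate.

Lemma block_iso_at_s1 : indecomposable M -> mod_iso M (kB k JS_up JT_up).
Proof.
have [t1 [/andP [JTt1 t1y] t1min]] := exists_t1.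
have [t0 [nJTt0 t0max]] := exists_t0.
have [v2 [phi [v2V2 [Wphi v2phi]]]] := separating_functional JTt1 t1y nJTt0.
exact: (separation_block_iso t1min t0max v2V2 Wphi v2phi).
Qed.
End FirstCoordinate.

Theorem block_iso : indecomposable M ->
  exists (JS : pred S) (JT : pred T) (hS : up_closed JS) (hT : up_closed JT),
    nonempty JS /\ nonempty JT /\ mod_iso M (kB k hS hT).
Proof.
move=> hind; have [s1 [/andP [JSs1 s1x] s1min]] := exists_s1.
exists JS, (JT s1), JS_up, (@JT_up s1); split; first by exists x'; exact: JS_x'.
split; first by exists y'; exact: JT_y' JSs1 s1x.
exact: block_iso_at_s1 JSs1 s1x s1min hind.
Qed.
End BlockConstruction.

Theorem lemma5p6 (k : fieldType) (dS dT : Order.disp_t)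
  (S : orderType dS) (T : orderType dT) (M : pfdMod k S T) :
  middle_exact M ->
  indecomposable M ->
  (exists (x x' : S) (y y' : T), (x <= x')%O /\ (y <= y')%O /\
     exists z : 'rV[k]_(pdim M (x', y')),
       forall (v : 'rV[k]_(pdim M (x, y'))) (w : 'rV[k]_(pdim M (x', y))),
         sq_diff (x', y') v w <> z) ->
  exists (JS : pred S) (JT : pred T)
         (hS : up_closed JS) (hT : up_closed JT),
    nonempty JS /\ nonempty JT /\ mod_iso M (kB k hS hT).
Proof.
move=> hME hind [x [x' [y [y' [hx [hy [z hz]]]]]]].
have U_proper : ~~ row_full (U M x x' y y').
  apply/negP => /(submx_full z) /sub_addsmxP [[u1 u2] /= e].
  by apply: (hz u1 (- u2)); rewrite /sq_diff e mulNmx opprK.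
exact: (block_iso hME hx hy U_proper hind).
Qed.
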